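(* Let $(V,\nu)$ be a strongly complete PN-space, $(W,\mu)$ a PN-space, and $(T_n)_{n\ge1}$ a sequence in $B(V,W)$ such that for every $x\in V$ the sequence $(T_nx)_{n\ge1}$ converges strongly in $W$. Define $T:V\to W$ by $Tx=\lim_{n\to\infty}T_nx$ (strong limit). Then $T$ is linear and $T\in B(V,W)$.
   Context: A distance distribution function is a map $F:[-\infty,+\infty]\to[0,1]$ that is nondecreasing, left-continuous on $\mathbb{R}$, with $F(-\infty)=0$, $F(+\infty)=1$ and $F(0)=0$; the set of these is $\Delta^+$. $\mathcal{D}^+\subseteq\Delta^+$ denotes the proper ones, i.e. those with $\lim_{x\to+\infty}F(x)=1$. $H_0\in\Delta^+$ is $H_0(x)=0$ for $x\le 0$ and $H_0(x)=1$ for $x>0$. For $F,G\in\Delta^+$ let $\tau_M(F,G)(x)=\sup\{\min(F(s),G(t)) : s+t=x\}$. In this paper a PN-space $(V,\nu)$ is a real vector space $V$ with a map $\nu:V\to\Delta^+$, $p\mapsto\nu_p$, such that for all $p,q\in V$: $\nu_p=H_0$ iff $p=0$; $\nu_{p+q}\ge\tau_M(\nu_p,\nu_q)$ pointwise; and $\nu_{\alpha p}(x)=\nu_p(x/|\alpha|)$ for all real $\alpha\neq0$ and $x\ge 0$. Standing assumption: $\nu_p\in\mathcal{D}^+$ for every $p\in V$. For $x\in V$ and $w\in(0,1)$ put $\|x\|_w=\sup\{t\in\mathbb{R}:\nu_x(t)<w\}$; for each $w$ this is a norm on $V$, and $w\mapsto\|x\|_w$ is nondecreasing. The strong topology on $V$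 is generated by the neighbourhoods $N_p(t)=\{q\in V:\nu_{p-q}(t)>1-t\}$, $p\in V$, $t>0$; equivalently the balls $\{x:\|x-p\|_w<r\}$ form a basis for it. A sequence $(p_n)$ converges strongly to $p$ if for every $t>0$ one has $p_n\in N_p(t)$ for all large $n$; it is strongly Cauchy if for every $t>0$ there is $N$ with $\nu_{p_n-p_m}(t)>1-t$ for all $m,n>N$. $(V,\nu)$ is strongly complete if every strongly Cauchy sequence converges strongly. $B(V,W)$ denotes the set of linear operators $V\to W$ that are continuous for the strong topologies. *)

From Stdlib Require Import Reals.
Open Scope R_scope.

Record RVS := {
  carrier :> Type;
  vadd : carrier -> carrier -> carrier;
  vzero : carrier;
  vopp : carrier -> carrier;
  vscal : R -> carrier -> carrier;
  vadd_assoc : forall x y z, vadd x (vadd y z) = vadd (vadd x y) z;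
  vadd_comm : forall x y, vadd x y = vadd y x;
  vadd_0 : forall x, vadd x vzero = x;
  vadd_opp : forall x, vadd x (vopp x) = vzero;
  vscal_1 : forall x, vscal 1 x = x;
  vscal_assoc : forall a b x, vscal a (vscal b x) = vscal (a * b) x;
  vscal_distr_v : forall a x y, vscal a (vadd x y) = vadd (vscal a x) (vscal a y);
  vscal_distr_s : forall a b x, vscal (a + b) x = vadd (vscal a x) (vscal b x)
}.

Arguments vadd {r}.
Arguments vzero {r}.
Arguments vopp {r}.
Arguments vscal {r}.

Definition vsub {V : RVS} (x y : V) : V := vadd x (vopp y).

(** A distance distribution function F in Delta^+, represented by its
    restriction to R (its values at -oo and +oo are forced to be 0 and 1). *)
Definition is_ddf (F : R -> R) : Prop :=
  (forall x, 0 <= F x <= 1) /\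
  (forall x y, x <= y -> F x <= F y) /\
  (forall x eps, 0 < eps -> exists d, 0 < d /\
      forall y, x - d < y < x -> Rabs (F y - F x) < eps) /\
  F 0 = 0.

Definition is_proper (F : R -> R) : Prop :=
  forall eps, 0 < eps -> exists M, forall x, M <= x -> Rabs (F x - 1) < eps.

Definition H0 (x : R) : R := if Rle_dec x 0 then 0 else 1.

(** PN-spaces (with the triangle function tau_M), under the standing
    assumption that every nu_p is proper.  The triangle axiom
    nu_{p+q} >= tau_M(nu_p, nu_q) is written out pointwise: it says that
    nu_{p+q}(x) bounds every min(nu_p(s), nu_q(t)) with s + t = x. *)
Record PNSpace := {
  pn_vs :> RVS;
  nu : pn_vs -> R -> R;
  nu_ddf : forall p, is_ddf (nu p);
  nu_proper : forall p, is_proper (nu p);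
  nu_H0 : forall p, (forall x, nu p x = H0 x) <-> p = vzero;
  nu_tri : forall p q x s t, s + t = x ->
      Rmin (nu p s) (nu q t) <= nu (vadd p q) x;
  nu_scal : forall p a x, a <> 0 -> 0 <= x -> nu (vscal a p) x = nu p (x / Rabs a)
}.

Arguments nu {p0} p x : rename.

Definition Nbhd {V : PNSpace} (p : V) (t : R) (q : V) : Prop :=
  nu (vsub p q) t > 1 - t.

Definition strong_conv {V : PNSpace} (u : nat -> V) (p : V) : Prop :=
  forall t, 0 < t -> exists N, forall n, (N <= n)%nat -> Nbhd p t (u n).

Definition strong_cauchy {V : PNSpace} (u : nat -> V) : Prop :=
  forall t, 0 < t -> exists N, forall m n, (N < m)%nat -> (N < n)%nat ->
    nu (vsub (u n) (u m)) t > 1 - t.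

Definition strongly_complete (V : PNSpace) : Prop :=
  forall u : nat -> V, strong_cauchy u -> exists p, strong_conv u p.

Definition linear_op {V W : PNSpace} (f : V -> W) : Prop :=
  (forall x y, f (vadd x y) = vadd (f x) (f y)) /\
  (forall a x, f (vscal a x) = vscal a (f x)).

(** Continuity for the strong topologies (the N_p(t) form neighbourhood bases). *)
Definition strong_continuous {V W : PNSpace} (f : V -> W) : Prop :=
  forall p t, 0 < t -> exists s, 0 < s /\
    forall q, Nbhd p s q -> Nbhd (f p) t (f q).

Definition in_B {V W : PNSpace} (f : V -> W) : Prop :=
  linear_op f /\ strong_continuous f.

(* Linearity of [T] passes to the limit since
   strong limits are unique and commute with sums and scalar multiples.  For
   continuity, fix [e > 0]: the sets of [z] with [nu (T_n z) a >= 1 - e] for all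
   [n] and all [a > k e] are closed and, by pointwise convergence and properness,
   cover [V].  Strong completeness gives Baire's theorem, so one of them contains
   a neighbourhood [N_x0(r)]; subtracting [x0] and rescaling by linearity yields a
   neighbourhood of [0] on which every [nu (T_n z) e >= 1 - e], and passing to
   the limit gives continuity of [T] at [0], hence everywhere. *)

From Stdlib Require Import Reals Lra Lia Classical ClassicalEpsilon.
Open Scope R_scope.

Section VectorSpace.
Variable V : RVS.
Implicit Types x y z : V.

Lemma vadd_0l x : vadd vzero x = x.
Proof. rewrite vadd_comm; apply vadd_0. Qed.

Lemma vopp_l x : vadd (vopp x) x = vzero.
Proof. rewrite vadd_comm; apply vadd_opp. Qed.

Lemma vadd_idem_eq0 x : vadd x x = x -> x = vzero.
Proof.
  intro Hx. transitivity (vadd (vadd x x) (vopp x)).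
  - rewrite <- vadd_assoc, vadd_opp, vadd_0. reflexivity.
  - rewrite Hx. apply vadd_opp.
Qed.

Lemma vscal_0l x : vscal 0 x = vzero.
Proof. apply vadd_idem_eq0. rewrite <- vscal_distr_s, Rplus_0_r. reflexivity. Qed.

Lemma vopp_unique x y : vadd x y = vzero -> y = vopp x.
Proof.
  intro H. rewrite <- (vadd_0 _ y), <- (vadd_opp _ x), vadd_assoc,
    (vadd_comm _ y x), H, vadd_0l. reflexivity.
Qed.

Lemma vopp_scal x : vopp x = vscal (-1) x.
Proof.
  symmetry. apply vopp_unique.
  rewrite <- (vscal_1 _ x) at 1. rewrite <- vscal_distr_s.
  replace (1 + -1) with 0 by ring. apply vscal_0l.
Qed.

Lemma vaddKsub x y : vsub (vadd x y) x = y.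
Proof.
  unfold vsub. rewrite (vadd_comm _ x y), <- vadd_assoc, vadd_opp, vadd_0. reflexivity.
Qed.

Lemma vsubKadd x y : vadd (vsub x y) y = x.
Proof. unfold vsub. rewrite <- vadd_assoc, vopp_l, vadd_0. reflexivity. Qed.

Lemma vsub_self x : vsub x x = vzero.
Proof. apply vadd_opp. Qed.

Lemma vsub_swap x y : vsub y x = vopp (vsub x y).
Proof.
  apply vopp_unique. unfold vsub.
  rewrite <- vadd_assoc, (vadd_assoc _ (vopp y) y), vopp_l, vadd_0l, vadd_opp.
  reflexivity.
Qed.

Lemma vsub_chain x y z : vsub x z = vadd (vsub x y) (vsub y z).
Proof.
  unfold vsub. rewrite <- vadd_assoc, (vadd_assoc _ (vopp y) y), vopp_l, vadd_0l.
  reflexivity.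
Qed.

Lemma vsub_add x y x' y' : vsub (vadd x y) (vadd x' y') = vadd (vsub x x') (vsub y y').
Proof.
  unfold vsub. rewrite !vopp_scal, vscal_distr_v, <- !vopp_scal, !vadd_assoc.
  f_equal. rewrite <- !vadd_assoc. f_equal. apply vadd_comm.
Qed.

Lemma vsub_scal (c : R) x y : vsub (vscal c x) (vscal c y) = vscal c (vsub x y).
Proof.
  unfold vsub. rewrite vscal_distr_v, !vopp_scal, !vscal_assoc, Rmult_comm.
  reflexivity.
Qed.

End VectorSpace.

Lemma linear_op_sub (V W : PNSpace) (f : V -> W) x y :
  linear_op f -> f (vsub x y) = vsub (f x) (f y).
Proof. intros [Hadd Hscal]. unfold vsub. rewrite Hadd, !vopp_scal, Hscal. reflexivity. Qed.

Section PNSpaceFacts.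
Variable V : PNSpace.
Implicit Types p q : V.

Lemma nu_bounds p t : 0 <= nu p t <= 1.
Proof. apply (proj1 (nu_ddf V p)). Qed.

Lemma nu_mono p s t : s <= t -> nu p s <= nu p t.
Proof. apply (proj1 (proj2 (nu_ddf V p))). Qed.

Lemma nu_nonpos p t : t <= 0 -> nu p t = 0.
Proof.
  intro Ht. pose proof (proj2 (proj2 (proj2 (nu_ddf V p)))).
  pose proof (nu_mono p t 0 Ht). pose proof (nu_bounds p t). lra.
Qed.

Lemma nu_vzero t : 0 < t -> nu (@vzero V) t = 1.
Proof.
  intro Ht. rewrite (proj2 (nu_H0 V vzero) eq_refl t). unfold H0.
  destruct (Rle_dec t 0); lra.
Qed.

Lemma nu_vopp p t : nu (vopp p) t = nu p t.
Proof.
  destruct (Rle_dec t 0) as [Ht|Ht].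
  - rewrite !nu_nonpos; auto.
  - rewrite vopp_scal, nu_scal by lra.
    replace (Rabs (-1)) with 1 by (rewrite Rabs_left; lra).
    f_equal. field.
Qed.

Lemma nu_vsub_sym p q t : nu (vsub p q) t = nu (vsub q p) t.
Proof. rewrite (vsub_swap _ p q), nu_vopp. reflexivity. Qed.

Lemma nu_vadd_ge p q s t : Rmin (nu p s) (nu q t) <= nu (vadd p q) (s + t).
Proof. apply nu_tri; reflexivity. Qed.

Lemma nu_vadd_gt p q s t b :
  b < nu p s -> b < nu q t -> b < nu (vadd p q) (s + t).
Proof.
  intros Hp Hq. pose proof (nu_vadd_ge p q s t).
  pose proof (Rmin_glb_lt _ _ _ Hp Hq). lra.
Qed.

Lemma nu_vadd_le p q s t b :
  b <= nu p s -> b <= nu q t -> b <= nu (vadd p q) (s + t).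
Proof.
  intros Hp Hq. pose proof (nu_vadd_ge p q s t).
  pose proof (Rmin_glb _ _ _ Hp Hq). lra.
Qed.

Lemma Nbhd_pos p t q : Nbhd p t q -> 0 < t.
Proof. unfold Nbhd. pose proof (nu_bounds (vsub p q) t). lra. Qed.

Lemma Nbhd_refl p t : 0 < t -> Nbhd p t p.
Proof. intro. unfold Nbhd. rewrite vsub_self, nu_vzero; lra. Qed.

Lemma Nbhd_sym p t q : Nbhd p t q -> Nbhd q t p.
Proof. unfold Nbhd. rewrite nu_vsub_sym. auto. Qed.

Lemma Nbhd_mono p s t q : Nbhd p s q -> s <= t -> Nbhd p t q.
Proof. unfold Nbhd. intros H Hst. pose proof (nu_mono (vsub p q) s t Hst). lra. Qed.

Lemma Nbhd_trans p q w s t : Nbhd p s q -> Nbhd q t w -> Nbhd p (s + t) w.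
Proof.
  intros H1 H2. pose proof (Nbhd_pos _ _ _ H1). pose proof (Nbhd_pos _ _ _ H2).
  unfold Nbhd in *. rewrite (vsub_chain _ p q w).
  apply nu_vadd_gt; eapply Rle_lt_trans; try eassumption; lra.
Qed.

Lemma vzero_of_nu_gt p : (forall t, 0 < t -> nu p t > 1 - t) -> p = vzero.
Proof.
  intro H. apply (nu_H0 V p). intro x. unfold H0.
  destruct (Rle_dec x 0) as [Hx|Hx]; [now apply nu_nonpos|].
  pose proof (nu_bounds p x).
  destruct (Rle_lt_dec 1 (nu p x)); [lra|].
  set (t := Rmin x (1 - nu p x)).
  assert (Ht : 0 < t) by (apply Rmin_glb_lt; lra).
  pose proof (H t Ht). pose proof (nu_mono p t x (Rmin_l _ _)).
  assert (t <= 1 - nu p x) by apply Rmin_r. lra.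
Qed.

Lemma strong_conv_unique (u : nat -> V) p q :
  strong_conv u p -> strong_conv u q -> p = q.
Proof.
  intros Hp Hq.
  assert (Hpq : vsub p q = vzero).
  { apply vzero_of_nu_gt. intros t Ht.
    destruct (Hp (t/2)) as [N1 H1]; [lra|]. destruct (Hq (t/2)) as [N2 H2]; [lra|].
    specialize (H1 (max N1 N2) ltac:(lia)). specialize (H2 (max N1 N2) ltac:(lia)).
    pose proof (Nbhd_trans _ _ _ _ _ H1 (Nbhd_sym _ _ _ H2)) as H.
    replace (t/2 + t/2) with t in H by field. exact H. }
  rewrite <- (vsubKadd _ p q), Hpq, vadd_0l. reflexivity.
Qed.

Lemma strong_conv_add (u v : nat -> V) p q : strong_conv u p -> strong_conv v q ->
  strong_conv (fun n => vadd (u n) (v n)) (vadd p q).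
Proof.
  intros Hu Hv t Ht.
  destruct (Hu (t/2)) as [N1 H1]; [lra|]. destruct (Hv (t/2)) as [N2 H2]; [lra|].
  exists (max N1 N2). intros n Hn.
  specialize (H1 n ltac:(lia)). specialize (H2 n ltac:(lia)).
  unfold Nbhd in *. rewrite vsub_add. replace t with (t/2 + t/2) by field.
  apply nu_vadd_gt; lra.
Qed.

Lemma strong_conv_scal (u : nat -> V) p c : strong_conv u p ->
  strong_conv (fun n => vscal c (u n)) (vscal c p).
Proof.
  intros Hu t Ht. destruct (Req_dec c 0) as [Hc|Hc].
  - exists 0%nat. intros n _. unfold Nbhd.
    rewrite vsub_scal, Hc, vscal_0l, nu_vzero; lra.
  - assert (Hca : 0 < Rabs c) by (apply Rabs_pos_lt; auto).
    set (t' := Rmin t (t / Rabs c)).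
    assert (Ht' : 0 < t') by (apply Rmin_glb_lt; [lra|apply Rdiv_lt_0_compat; lra]).
    destruct (Hu t' Ht') as [N HN]. exists N. intros n Hn.
    specialize (HN n Hn). unfold Nbhd in *.
    rewrite vsub_scal, nu_scal by (auto; lra).
    pose proof (nu_mono (vsub p (u n)) t' (t / Rabs c) (Rmin_r _ _)).
    assert (t' <= t) by apply Rmin_l. lra.
Qed.

Lemma nu_strong_limit_gt (u : nat -> V) p e :
  0 < e -> (forall n, 1 - e <= nu (u n) e) -> strong_conv u p -> 1 - 2 * e < nu p (2 * e).
Proof.
  intros He Hu Hp. destruct (Hp e He) as [N HN]. specialize (HN N (le_n N)).
  unfold Nbhd in HN. rewrite <- (vsubKadd _ p (u N)).
  replace (2 * e) with (e + e) by ring.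
  apply nu_vadd_gt; [lra|]. specialize (Hu N). lra.
Qed.

End PNSpaceFacts.

Lemma strong_limit_linear (V W : PNSpace) (F : nat -> V -> W) (T : V -> W) :
  (forall n, linear_op (F n)) ->
  (forall x, strong_conv (fun n => F n x) (T x)) -> linear_op T.
Proof.
  intros HF HT. split.
  - intros x y. apply (strong_conv_unique W (fun n => F n (vadd x y))); [apply HT|].
    intros t Ht. destruct (strong_conv_add W _ _ _ _ (HT x) (HT y) t Ht) as [N HN].
    exists N. intros n Hn. rewrite (proj1 (HF n)). apply HN, Hn.
  - intros a x. apply (strong_conv_unique W (fun n => F n (vscal a x))); [apply HT|].
    intros t Ht. destruct (strong_conv_scal W _ _ a (HT x) t Ht) as [N HN].
    exists N. intros n Hn. rewrite (proj2 (HF n)). apply HN, Hn.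
Qed.

Lemma strong_continuous_of_linear (V W : PNSpace) (f : V -> W) :
  linear_op f ->
  (forall t, 0 < t -> exists s, 0 < s /\ forall z, nu z s > 1 - s -> nu (f z) t > 1 - t) ->
  strong_continuous f.
Proof.
  intros Hf H0 p t Ht. destruct (H0 t Ht) as [s [Hs Hfs]]. exists s. split; auto.
  intros q Hq. unfold Nbhd in *. rewrite <- linear_op_sub by exact Hf. auto.
Qed.

Section NestedNbhds.
Variable V : PNSpace.
Variables (x : nat -> V) (r : nat -> R).
Hypothesis r_pos : forall k, 0 < r k.
Hypothesis r_shrink : forall k, r (S k) <= r k / 4.
Hypothesis x_step : forall k, Nbhd (x k) (r k / 2) (x (S k)).

Lemma nested_nbhd_tail k j : Nbhd (x k) (3/4 * r k) (x (k + j)).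
Proof.
  assert (Hstep : forall k j, Nbhd (x k) (r k - 2/3 * r (k + j)%nat) (x (k + j)%nat)).
  { clear k j. intros k j. induction j as [|j IH].
    - rewrite Nat.add_0_r. apply Nbhd_refl. pose proof (r_pos k). lra.
    - rewrite Nat.add_succ_r. eapply Nbhd_mono.
      + eapply Nbhd_trans; [exact IH|apply x_step].
      + pose proof (r_shrink (k + j)). lra. }
  destruct j as [|j].
  - rewrite Nat.add_0_r. apply Nbhd_refl. pose proof (r_pos k). lra.
  - replace (k + S j)%nat with (S k + j)%nat by lia. eapply Nbhd_mono.
    + eapply Nbhd_trans; [apply x_step|apply (Hstep (S k) j)].
    + pose proof (r_shrink k). pose proof (r_pos (S k + j)). lra.
Qed.

Lemma nested_radius_harmonic : r 0 <= 1 -> forall k, r k * (INR k + 1) <= 1.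
Proof.
  intros Hr0 k. induction k as [|k IH]; [simpl; lra|].
  rewrite S_INR. pose proof (pos_INR k). pose proof (r_pos k). pose proof (r_shrink k).
  nra.
Qed.

Lemma nested_nbhd_cauchy : r 0 <= 1 -> strong_cauchy x.
Proof.
  intros Hr0 t Ht. destruct (INR_archimed (t/2) 1) as [N HN]; [lra|].
  exists N. intros m n Hm Hn.
  assert (HrN : r N < t / 2).
  { pose proof (nested_radius_harmonic Hr0 N). pose proof (r_pos N). nra. }
  pose proof (nested_nbhd_tail N (m - N)) as Hxm.
  pose proof (nested_nbhd_tail N (n - N)) as Hxn.
  replace (N + (m - N))%nat with m in Hxm by lia.
  replace (N + (n - N))%nat with n in Hxn by lia.
  eapply Nbhd_mono; [exact (Nbhd_trans _ _ _ _ _ _ (Nbhd_sym _ _ _ _ Hxn) Hxm)|lra].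
Qed.

Lemma nested_nbhd_limit p : strong_conv x p -> forall k, Nbhd (x k) (r k) p.
Proof.
  intros Hp k. destruct (Hp (r k / 4)) as [N HN]; [pose proof (r_pos k); lra|].
  specialize (HN (k + N)%nat ltac:(lia)).
  eapply Nbhd_mono.
  - exact (Nbhd_trans _ _ _ _ _ _ (nested_nbhd_tail k N) (Nbhd_sym _ _ _ _ HN)).
  - lra.
Qed.

End NestedNbhds.

Section Baire.
Variable V : PNSpace.
Variable E : nat -> V -> Prop.
Hypothesis V_complete : strongly_complete V.
Hypothesis E_cover : forall z, exists k, E k z.
Hypothesis E_closed : forall k z, ~ E k z ->
  exists r, 0 < r /\ forall z', Nbhd z r z' -> ~ E k z'.

Definition shrink_avoiding (k : nat) (xr xr' : V * R) : Prop :=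
  0 < snd xr' /\ snd xr' <= snd xr / 4 /\ Nbhd (fst xr) (snd xr / 2) (fst xr') /\
  forall z, Nbhd (fst xr') (snd xr') z -> ~ E k z.

Lemma shrink_avoiding_exists :
  (forall k x r, 0 < r -> exists z, Nbhd x r z /\ ~ E k z) ->
  forall k (xr : V * R), 0 < snd xr -> exists xr', shrink_avoiding k xr xr'.
Proof.
  intros Hnot k [x r] Hr. simpl in Hr.
  destruct (Hnot k x (r/2)) as [z [Hz HE]]; [lra|].
  destruct (E_closed k z HE) as [rho [Hrho Hball]].
  exists (z, Rmin rho (r/4)). repeat split; simpl.
  - apply Rmin_glb_lt; lra.
  - apply Rmin_r.
  - exact Hz.
  - intros z' Hz'. apply Hball. eapply Nbhd_mono; [exact Hz'|apply Rmin_l].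
Qed.

Theorem baire_category : exists k x0 r, 0 < r /\ forall z, Nbhd x0 r z -> E k z.
Proof.
  apply NNPP. intro Hno.
  assert (Hnot : forall k x r, 0 < r -> exists z, Nbhd x r z /\ ~ E k z).
  { intros k x r Hr. apply NNPP. intro C. apply Hno. exists k, x, r. split; auto.
    intros z Hz. apply NNPP. intro C2. apply C. exists z. auto. }
  assert (Hchoice : forall k (xr : V * R),
             {xr' | 0 < snd xr -> shrink_avoiding k xr xr'}).
  { intros k xr. apply constructive_indefinite_description.
    destruct (Rlt_dec 0 (snd xr)) as [Hr|Hr].
    - destruct (shrink_avoiding_exists Hnot k xr Hr) as [xr' H]. exists xr'. auto.
    - exists xr. intro. contradiction. }
  pose (s := fix s (k : nat) : V * R :=
         match k with O => (vzero, 1) | S k => proj1_sig (Hchoice k (s k)) end).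
  assert (Hs : forall k, 0 < snd (s k) -> shrink_avoiding k (s k) (s (S k))).
  { intro k. exact (proj2_sig (Hchoice k (s k))). }
  assert (Hpos : forall k, 0 < snd (s k)).
  { induction k as [|k IH]; [simpl; lra|]. apply (Hs k IH). }
  pose (x := fun k => fst (s k)). pose (r := fun k => snd (s k)).
  assert (r_shrink : forall k, r (S k) <= r k / 4) by (intro k; apply (Hs k (Hpos k))).
  assert (x_step : forall k, Nbhd (x k) (r k / 2) (x (S k)))
    by (intro k; apply (Hs k (Hpos k))).
  destruct (V_complete x) as [p Hp].
  { apply (nested_nbhd_cauchy V x r Hpos r_shrink x_step). unfold r; simpl; lra. }
  destruct (E_cover p) as [k Hk].
  apply (proj2 (proj2 (proj2 (Hs k (Hpos k)))) p); [|exact Hk].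
  exact (nested_nbhd_limit V x r Hpos r_shrink x_step p Hp (S k)).
Qed.

End Baire.

Lemma proper_eventually_uniform (f : nat -> R -> R) (e : R) (N : nat) :
  (forall n, is_proper (f n)) -> 0 < e ->
  exists M, forall n t, (n < N)%nat -> M <= t -> 1 - e < f n t.
Proof.
  intros Hf He. induction N as [|N [M HM]].
  - exists 0. intros; lia.
  - destruct (Hf N e He) as [M' HM']. exists (Rmax M M'). intros n t Hn Ht.
    destruct (Nat.eq_dec n N) as [->|Hne].
    + assert (HtM' : M' <= t) by (pose proof (Rmax_r M M'); lra).
      specialize (HM' t HtM'). apply Rabs_def2 in HM'. lra.
    + apply HM; [lia|]. pose proof (Rmax_l M M'); lra.
Qed.

Section UniformBoundedness.
Variables V W : PNSpace.
Variable F : nat -> V -> W.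

Definition equibounded_at (e : R) (k : nat) (z : V) : Prop :=
  forall n a, INR k * e < a -> 1 - e <= nu (F n z) a.

Lemma equibounded_at_cover e :
  0 < e -> (forall z, exists y, strong_conv (fun n => F n z) y) ->
  forall z, exists k, equibounded_at e k z.
Proof.
  intros He Hconv z. destruct (Hconv z) as [y Hy].
  destruct (Hy e He) as [N HN].
  destruct (nu_proper W y e He) as [M1 HM1].
  destruct (proper_eventually_uniform (fun n => nu (F n z)) e N
              (fun n => nu_proper W (F n z)) He) as [M2 HM2].
  destruct (INR_archimed e (Rmax (M1 + e) M2) He) as [k Hk].
  exists k. intros n a Ha.
  pose proof (Rmax_l (M1 + e) M2). pose proof (Rmax_r (M1 + e) M2).
  destruct (Nat.lt_ge_cases n N) as [Hn|Hn].
  - apply Rlt_le, (HM2 n a Hn). lra.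
  - specialize (HN n ltac:(lia)). unfold Nbhd in HN. rewrite nu_vsub_sym in HN.
    specialize (HM1 (a - e) ltac:(lra)). apply Rabs_def2 in HM1.
    rewrite <- (vsubKadd _ (F n z) y). replace a with (e + (a - e)) by ring.
    apply nu_vadd_le; lra.
Qed.

Lemma not_equibounded_at_open e k z :
  0 < e -> (forall n, strong_continuous (F n)) -> ~ equibounded_at e k z ->
  exists r, 0 < r /\ forall z', Nbhd z r z' -> ~ equibounded_at e k z'.
Proof.
  intros He Hcont Hz.
  assert (exists n a, INR k * e < a /\ nu (F n z) a < 1 - e) as [n [a [Ha Hna]]].
  { apply NNPP. intro C. apply Hz. intros n a Ha. apply NNPP. intro C2.
    apply C. exists n, a. split; auto. lra. }
  set (d := Rmin ((a - INR k * e) / 2) e).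
  assert (Hd : 0 < d) by (apply Rmin_glb_lt; lra).
  assert (Hd1 : d <= (a - INR k * e) / 2) by apply Rmin_l.
  assert (Hd2 : d <= e) by apply Rmin_r.
  destruct (Hcont n z d Hd) as [s [Hs Hsd]].
  exists s. split; auto. intros z' Hz' Hbd.
  specialize (Hsd z' Hz'). unfold Nbhd in Hsd.
  specialize (Hbd n (a - d) ltac:(lra)).
  assert (Hle : 1 - e <= nu (F n z) a).
  { rewrite <- (vsubKadd _ (F n z) (F n z')). replace a with (d + (a - d)) by ring.
    apply nu_vadd_le; lra. }
  lra.
Qed.

Hypothesis F_linear : forall n, linear_op (F n).

Lemma equibounded_at_sub e k x y :
  equibounded_at e k x -> equibounded_at e k y -> equibounded_at e (2 * k) (vsub x y).
Proof.
  intros Hx Hy n b Hb. rewrite mult_INR in Hb. simpl INR in Hb.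
  rewrite linear_op_sub by apply F_linear. unfold vsub.
  replace b with (b/2 + b/2) by field.
  apply nu_vadd_le; [|rewrite nu_vopp]; [apply Hx|apply Hy]; lra.
Qed.

Lemma equibounded_at_scal e m c z :
  0 < e -> INR m < c -> equibounded_at e m (vscal c z) ->
  forall n, 1 - e <= nu (F n z) e.
Proof.
  intros He Hc Hz n. pose proof (pos_INR m).
  specialize (Hz n (c * e) ltac:(nra)).
  rewrite (proj2 (F_linear n)), nu_scal, Rabs_right in Hz by nra.
  replace (c * e / c) with e in Hz by (field; lra). exact Hz.
Qed.

Theorem uniform_boundedness :
  strongly_complete V -> (forall n, strong_continuous (F n)) ->
  (forall z, exists y, strong_conv (fun n => F n z) y) ->
  forall e, 0 < e -> exists s, 0 < s /\
    forall z, nu z s > 1 - s -> forall n, 1 - e <= nu (F n z) e.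
Proof.
  intros Hcomp Hcont Hconv e He.
  destruct (baire_category V (equibounded_at e) Hcomp
              (equibounded_at_cover e He Hconv)
              (fun k z => not_equibounded_at_open e k z He Hcont))
    as [k [x0 [r [Hr Hball]]]].
  pose proof (pos_INR k).
  set (c := 2 * INR k + 1).
  exists (r / c). split; [apply Rdiv_lt_0_compat; unfold c; lra|].
  intros z Hz.
  assert (Hrc : r / c <= r).
  { apply Rmult_le_reg_r with c; [unfold c; lra|].
    unfold Rdiv. rewrite Rmult_assoc, Rinv_l by (unfold c; lra). unfold c. nra. }
  assert (Hw : Nbhd x0 r (vadd x0 (vscal c z))).
  { unfold Nbhd. rewrite nu_vsub_sym, vaddKsub, nu_scal by (unfold c; lra).
    rewrite Rabs_right by (unfold c; lra). lra. }
  pose proof (equibounded_at_sub e k _ _ (Hball _ Hw) (Hball x0 (Nbhd_refl V x0 r Hr)))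
    as Hbd.
  rewrite vaddKsub in Hbd.
  apply (equibounded_at_scal e (2 * k) c z He); [|exact Hbd].
  rewrite mult_INR. simpl INR. unfold c. lra.
Qed.

End UniformBoundedness.

Theorem theorem4p12 (V W : PNSpace) (Tn : nat -> V -> W) (T : V -> W) :
  strongly_complete V ->
  (forall n, in_B (Tn n)) ->
  (forall x, exists y, strong_conv (fun n => Tn n x) y) ->
  (forall x, strong_conv (fun n => Tn n x) (T x)) ->
  linear_op T /\ in_B T.
Proof.
  intros Hcomp HB Hconv HT.
  assert (Hlin : linear_op T)
    by exact (strong_limit_linear V W Tn T (fun n => proj1 (HB n)) HT).
  split; [exact Hlin|]. split; [exact Hlin|].
  apply strong_continuous_of_linear; [exact Hlin|]. intros t Ht.
  destruct (uniform_boundedness V W Tn (fun n => proj1 (HB n)) Hcomp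
              (fun n => proj2 (HB n)) Hconv (t / 2) ltac:(lra)) as [s [Hs Hbd]].
  exists s. split; [exact Hs|]. intros z Hz.
  pose proof (nu_strong_limit_gt W _ (T z) (t / 2) ltac:(lra) (Hbd z Hz) (HT z)) as Hlim.
  replace (2 * (t / 2)) with t in Hlim by field. lra.
Qed.
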